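(* Let $X$ be a topological space and let $g,f:X\to\mathbb{R}$ be functions with $g\le f$ (i.e. $g(x)\le f(x)$ for all $x\in X$). Suppose there exist a strong binary relation $\rho$ on the power set $\mathcal{P}(X)$, and, for each rational number $t$, lower indefinite cut sets $A(f,t)$ and $A(g,t)$ in the domain of $f$ and $g$ respectively at the level $t$, such that whenever $t_1<t_2$ are rationals we have $A(f,t_1)\,\rho\,A(g,t_2)$. (a) If every $\Lambda$-set in $X$ is open, then there exists a contra-continuous function $h:X\to\mathbb{R}$ with $g\le h\le f$. (b) If every $\Lambda$-set in $X$ is a $G_\delta$-set, then there exists a Baire-one function $h:X\to\mathbb{R}$ with $g\le h\le f$.
   Context: A $\Lambda$-set in a topological space $X$ is a set that is an intersection of open sets. For $A\subseteq X$, define $A^{\Lambda}=\bigcap\{O: O\supseteq A,\ O \text{ open}\}$ and $A^{V}=\bigcup\{F: F\subseteq A,\ F \text{ closed}\}$. For a binary relation $\rho$ on a set $S$, define $\bar\rho$ by: $x\,\bar\rho\,y$ iff for all $u,v\in S$, ($y\,\rho\,v$ implies $x\,\rho\,v$) and ($u\,\rho\,x$ implies $u\,\rho\,y$). A binary relation $\rho$ on $\mathcal{P}(X)$ is a strong binary relation if: (1) whenever $A_i\,\rho\,B_j$ for all $i\in\{1,\dots,m\}$ and $j\in\{1,\dots,n\}$, there is $C\in\mathcal{P}(X)$ with $A_i\,\rho\,C$ and $C\,\rho\,B_j$ for all such $i,j$; (2) $A\subseteq B$ implies $A\,\bar\rho\,B$; (3) $A\,\rho\,B$ implies $A^{\Lambda}\subseteq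 B$ and $A\subseteq B^{V}$. For $f:X\to\mathbb{R}$ and $l\in\mathbb{R}$, a set $A(f,l)$ with $\{x: f(x)<l\}\subseteq A(f,l)\subseteq\{x: f(x)\le l\}$ is a lower indefinite cut set in the domain of $f$ at level $l$. A function $h:X\to\mathbb{R}$ is contra-continuous (resp. Baire-one) if the preimage of every open subset of $\mathbb{R}$ is closed (resp. an $F_\sigma$-set) in $X$. *)

From HB Require Import structures.
From mathcomp Require Import all_boot all_order all_algebra.
From mathcomp Require Import all_classical all_reals all_analysis.
From mathcomp Require Import borel_hierarchy.
Set Implicit Arguments. Unset Strict Implicit. Unset Printing Implicit Defensive.
Import Order.TTheory GRing.Theory Num.Theory.
Import numFieldNormedType.Exports.
Local Open Scope classical_set_scope.
Local Open Scope ring_scope.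

Section Defs.
Context {X : topologicalType}.

Definition Lambda_set (A : set X) : Prop :=
  exists F : set (set X), (forall O, F O -> open O) /\ A = \bigcap_(O in F) O.

Definition Lambda_hull (A : set X) : set X :=
  \bigcap_(O in [set O : set X | open O /\ A `<=` O]) O.

Definition V_kernel (A : set X) : set X :=
  \bigcup_(F in [set F : set X | closed F /\ F `<=` A]) F.

Definition rel_bar (S : Type) (rho : S -> S -> Prop) (x y : S) : Prop :=
  forall u v : S, (rho y v -> rho x v) /\ (rho u x -> rho u y).

Definition strong_binary_relation (rho : set X -> set X -> Prop) : Prop :=
  (forall (m n : nat) (A : 'I_m.+1 -> set X) (B : 'I_n.+1 -> set X),
      (forall i j, rho (A i) (B j)) ->
      exists C : set X, (forall i, rho (A i) C) /\ (forall j, rho C (B j)))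
  /\ (forall A B : set X, A `<=` B -> rel_bar rho A B)
  /\ (forall A B : set X, rho A B -> Lambda_hull A `<=` B /\ A `<=` V_kernel B).

Definition lower_indefinite_cut {R : realType} (f : X -> R) (l : R) (A : set X)
  : Prop :=
  [set x | f x < l] `<=` A /\ A `<=` [set x | f x <= l].

Definition contra_continuous {R : realType} (h : X -> R) : Prop :=
  forall U : set R, open U -> closed (h @^-1` U).

Definition baire_one {R : realType} (h : X -> R) : Prop :=
  forall U : set R, open U -> Fsigma (h @^-1` U).

End Defs.

From HB Require Import structures.
From mathcomp Require Import all_boot all_order all_algebra.
From mathcomp Require Import all_classical all_reals all_analysis.
From mathcomp Require Import borel_hierarchy.
Set Implicit Arguments. Unset Strict Implicit. Unset Printing Implicit Defensive.
Import Order.TTheory GRing.Theory Num.Theory.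
Import numFieldNormedType.Exports.
Local Open Scope classical_set_scope.
Local Open Scope ring_scope.

(* Call x and y linked when one lies in the closure of the other. Condition (3)
   on rho forces rho A B to imply that every point linked to A lies in B, and
   interpolating with condition (1) shows that B even contains every point
   reachable from A by a finite chain of links. Hence
   h x := inf {t rational | x is chain-linked to A(f,t)}
   lies between g and f, and h is constant along links. Any set closed under
   links has a Lambda-set as complement (the intersection of the complements of
   the closures of its points), so every preimage under h has an open, resp.
   G_delta, complement. *)

Section Links.
Context {X : topologicalType}.

Definition linked (x y : X) : Prop := closure [set x] y \/ closure [set y] x.

Lemma linked_refl (x : X) : linked x x.
Proof. by left; apply: subset_closure. Qed.

Lemma linked_sym (x y : X) : linked x y -> linked y x.
Proof. by case=> ?; [right | left]. Qed.

Definition link_step (A : set X) : set X := [set y | exists2 x, A x & linked x y].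

Lemma sub_link_step (A : set X) : A `<=` link_step A.
Proof. by move=> x Ax; exists x => //; apply: linked_refl. Qed.

Lemma link_stepS (A B : set X) : A `<=` B -> link_step A `<=` link_step B.
Proof. by move=> AB y [x Ax xy]; exists x => //; apply: AB. Qed.

Definition linked_hull (A : set X) : set X :=
  \bigcup_(n in [set: nat]) iter n link_step A.

Lemma sub_linked_hull (A : set X) : A `<=` linked_hull A.
Proof. by move=> x Ax; exists 0%N. Qed.

Lemma linked_hull_linked (A : set X) (x y : X) :
  linked_hull A x -> linked x y -> linked_hull A y.
Proof. by move=> [n _ Anx] xy; exists n.+1 => //; exists x. Qed.

Lemma Lambda_hull_closure1 (A : set X) (x y : X) :
  A x -> closure [set y] x -> Lambda_hull A y.
Proof.
move=> Ax yx O [oO AO].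
by have [_ [-> //]] := yx O (open_nbhs_nbhs (conj oO (AO x Ax))).
Qed.

Lemma V_kernel_closure1 (A : set X) (x y : X) :
  V_kernel A x -> closure [set x] y -> A y.
Proof.
move=> [F [cF FA] Fx] xy; apply: FA.
by rewrite (closure_id F).1 //; apply: closureS xy => _ ->.
Qed.

Lemma Lambda_setC_closure_stable (P : set X) :
  (forall x y, P x -> closure [set x] y -> P y) -> Lambda_set (~` P).
Proof.
move=> stableP; exists [set ~` closure [set x] | x in P]; split.
  by move=> _ [x _ <-]; rewrite openC; apply: closed_closure.
apply/seteqP; split=> [y nPy _ [x Px <-] xy | y hy Py].
  exact/nPy/(stableP x).
by apply: (hy (~` closure [set y])); [exists y | apply: subset_closure].
Qed.

Lemma Lambda_setC_preimage_linked {T : Type} (h : X -> T) (U : set T) :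
  (forall x y, linked x y -> h x = h y) -> Lambda_set (~` (h @^-1` U)).
Proof.
move=> hlinked; apply: Lambda_setC_closure_stable => x y Ux xy.
by rewrite /preimage /= -(hlinked x y) //; left.
Qed.

Lemma contra_continuous_linked {R : realType} (h : X -> R) :
  (forall A : set X, Lambda_set A -> open A) ->
  (forall x y, linked x y -> h x = h y) -> contra_continuous h.
Proof.
move=> LambdaO hlinked U _.
by rewrite -openC; apply/LambdaO/Lambda_setC_preimage_linked.
Qed.

Lemma baire_one_linked {R : realType} (h : X -> R) :
  (forall A : set X, Lambda_set A -> Gdelta A) ->
  (forall x y, linked x y -> h x = h y) -> baire_one h.
Proof.
move=> LambdaG hlinked U _.
have [G oG eG] := LambdaG _ (Lambda_setC_preimage_linked U hlinked).
exists (fun i => ~` G i); first by move=> i; rewrite closedC.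
by rewrite -setC_bigcap -eG setCK.
Qed.

Section StrongRelation.
Variable rho : set X -> set X -> Prop.
Hypothesis rhoS : strong_binary_relation rho.

Lemma strong_rel_interpolate (A B : set X) :
  rho A B -> exists2 C, rho A C & rho C B.
Proof.
move=> AB; have [C [AC CB]] := rhoS.1 0%N 0%N (fun=> A) (fun=> B) (fun _ _ => AB).
by exists C; [apply: AC ord0 | apply: CB ord0].
Qed.

Lemma strong_rel_link_step (A B : set X) : rho A B -> link_step A `<=` B.
Proof.
move=> /rhoS.2.2[LAB AVB] y [x Ax [xy | yx]].
  exact: V_kernel_closure1 (AVB x Ax) xy.
by apply: LAB; apply: Lambda_hull_closure1 Ax yx.
Qed.

Lemma strong_rel_linked_hull (A B : set X) : rho A B -> linked_hull A `<=` B.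
Proof.
suff iter_sub n : forall A B, rho A B -> iter n link_step A `<=` B.
  by move=> AB y [n _]; apply: iter_sub AB y.
elim: n => [|n IH] {}A {}B AB /=.
  by move=> x /sub_link_step; apply: strong_rel_link_step.
have [C AC CB] := strong_rel_interpolate AB.
by move=> y /(link_stepS (IH _ _ AC)); apply: strong_rel_link_step.
Qed.

End StrongRelation.
End Links.

Section Insertion.
Variables (R : realType) (X : topologicalType) (Af : rat -> set X).

Let levels (x : X) : set R :=
  [set ratr t | t in [set t | linked_hull (Af t) x]].

Definition insertion (x : X) : R := inf (levels x).

Lemma insertion_linked (x y : X) : linked x y -> insertion x = insertion y.
Proof.
move=> xy; rewrite /insertion; congr inf.
by apply/seteqP; split=> _ [t Atx <-]; exists t => //;
  apply: linked_hull_linked Atx _ => //; apply: linked_sym.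
Qed.

Variables (g f : X -> R) (rho : set X -> set X -> Prop) (Ag : rat -> set X).
Hypothesis rhoS : strong_binary_relation rho.
Hypothesis cut_f : forall t : rat, lower_indefinite_cut f (ratr t) (Af t).
Hypothesis cut_g : forall t : rat, lower_indefinite_cut g (ratr t) (Ag t).
Hypothesis rho_cuts : forall t1 t2 : rat, t1 < t2 -> rho (Af t1) (Ag t2).

Let levels_ratr (x : X) (t : rat) : f x < ratr t -> levels x (ratr t).
Proof. by move=> ft; exists t => //; apply/sub_linked_hull/(cut_f t).1. Qed.

Let levels_neq0 (x : X) : levels x !=set0.
Proof.
have fx1 : f x < f x + 1 by rewrite ltrDl.
have [t] := rat_in_itvoo fx1.
by rewrite in_itv /= => /andP[ft _]; exists (ratr t); apply: levels_ratr.
Qed.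

Let levels_lbound (x : X) : lbound (levels x) (g x).
Proof.
move=> _ [t Atx <-]; rewrite leNgt; apply/negP => tg.
have [u] := rat_in_itvoo tg; rewrite in_itv /= => /andP[tu ug].
have {}tu : t < u by rewrite -(ltr_rat R).
have /(cut_g u).2 : Ag u x by apply: (strong_rel_linked_hull rhoS (rho_cuts tu)).
by rewrite /= leNgt ug.
Qed.

Let le_insertion (x : X) : g x <= insertion x.
Proof. by apply: lb_le_inf; [apply: levels_neq0 | apply: levels_lbound]. Qed.

Let insertion_le (x : X) : insertion x <= f x.
Proof.
rewrite leNgt; apply/negP => fh.
have [t] := rat_in_itvoo fh; rewrite in_itv /= => /andP[ft th].
have : insertion x <= ratr t.
  by apply: ge_inf (levels_ratr ft); exists (g x); apply: levels_lbound.
by rewrite leNgt th.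
Qed.

Lemma insertion_between (x : X) : g x <= insertion x <= f x.
Proof. by rewrite le_insertion insertion_le. Qed.

End Insertion.

Theorem theorem1 (R : realType) (X : topologicalType) (g f : X -> R)
  (hgf : forall x, g x <= f x)
  (hyp : exists rho : set X -> set X -> Prop,
     strong_binary_relation rho /\
     exists Af Ag : rat -> set X,
       (forall t : rat, lower_indefinite_cut f (ratr t) (Af t)) /\
       (forall t : rat, lower_indefinite_cut g (ratr t) (Ag t)) /\
       (forall t1 t2 : rat, t1 < t2 -> rho (Af t1) (Ag t2))) :
  ((forall A : set X, Lambda_set A -> open A) ->
     exists h : X -> R, contra_continuous h /\ forall x, g x <= h x <= f x)
  /\
  ((forall A : set X, Lambda_set A -> Gdelta A) ->
     exists h : X -> R, baire_one h /\ forall x, g x <= h x <= f x).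
Proof.
have [rho [rhoS [Af [Ag [cut_f [cut_g rho_cuts]]]]]] := hyp.
pose h := insertion R Af.
have h_linked x y : linked x y -> h x = h y by apply: insertion_linked.
have g_h_f x : g x <= h x <= f x := insertion_between rhoS cut_f cut_g rho_cuts x.
split=> [LambdaO | LambdaG]; exists h; split=> //.
  exact: contra_continuous_linked.
exact: baire_one_linked.
Qed.
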